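(* In the elliptically symmetric deformation model $p(\bm x,\bm\theta)=|\Lambda|g(\|\Lambda(\bm x-\bm\mu)\|)$ (with $f(\bm z)=g(\|\bm z\|)$ having mean $0$ and covariance $I$, $\Lambda$ symmetric positive definite), let $\bm x_1,\dots,\bm x_n$ ($n\ge d$) be observations such that the sample covariance $\hat\Sigma=\frac1n\sum_{t=1}^n(\bm x_t-\bar{\bm x})(\bm x_t-\bar{\bm x})^\top$, $\bar{\bm x}=\frac1n\sum_t\bm x_t$, is positive definite. Then the Wasserstein estimator $\hat{\bm\theta}_W=(\hat{\bm\mu}_W,\hat\Lambda_W)$, i.e. the solution with $\Lambda$ symmetric positive definite of the estimating equations $\frac1n\sum_{t=1}^n S^W_k(\bm x_t,\bm\theta)=0$ for all Wasserstein scores $S^W_k$ (for all $\mu_i$ and all $\Lambda_{ij}$), is $$\hat{\bm\mu}_W=\bar{\bm x},\qquad \hat\Lambda_W=\hat\Sigma^{-1/2},$$ irrespective of the waveform $g$.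
   Context: The Wasserstein score $S^W_i$ for a parameter $\theta_i$ of a family $p(\bm x,\bm\theta)$ is the solution of $\nabla_{\bm x}\cdot(p\nabla_{\bm x}S^W_i)=-\partial_{\theta_i}p$ with $\mathrm{E}_{\bm\theta}[S^W_i]=0$. For this model the scores are $S^W_{\mu_i}=x_i-\mu_i$ and, for $\Lambda_{ij}$, $S^W_{\Lambda_{ij}}=\tfrac12\bm x^\top A\bm x+\bm b^\top\bm x-\mathrm{E}_{\bm\theta}[\tfrac12\bm x^\top A\bm x+\bm b^\top\bm x]$ where $A$ is the symmetric solution of $\Lambda^2A+A\Lambda^2=-\frac12(L+L^\top)$, $L=\Lambda\bm e_i\bm e_j^\top+\bm e_i\bm e_j^\top\Lambda$, and $\bm b=-A\bm\mu$. $\hat\Sigma^{-1/2}$ is the symmetric positive definite inverse square root. *)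

From HB Require Import structures.
From mathcomp Require Import all_boot all_order all_algebra.
From mathcomp Require Import all_classical all_reals all_analysis.
Set Implicit Arguments. Unset Strict Implicit. Unset Printing Implicit Defensive.
Import Order.TTheory GRing.Theory Num.Theory.
Local Open Scope ring_scope.

Definition spd (R : realType) (d : nat) (M : 'M[R]_d) : Prop :=
  M^T = M /\ forall v : 'cV[R]_d, v != 0 -> 0 < (v^T *m M *m v) 0 0.

Definition spd_inv_sqrt (R : realType) (d : nat) (M S : 'M[R]_d) : Prop :=
  spd S /\ S *m S *m M = 1%:M.

Definition sample_mean (R : realType) (d n : nat) (x : 'I_n -> 'cV[R]_d)
  : 'cV[R]_d := (n%:R)^-1 *: \sum_(t < n) x t.

Definition sample_cov (R : realType) (d n : nat) (x : 'I_n -> 'cV[R]_d)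
  : 'M[R]_d :=
  (n%:R)^-1 *: \sum_(t < n)
     ((x t - sample_mean x) *m (x t - sample_mean x)^T).

Definition zvec (R : realType) (dT : measure_display) (T : measurableType dT)
  (P : probability T R) (d : nat) (z : 'I_d -> {RV P >-> R}) (w : T)
  : 'cV[R]_d := \col_i (z i w).

(* E_theta[h(x)] where x = mu + Lambda^{-1} z has density
   |Lambda| f(Lambda (x - mu)), z ~ f. *)
Definition model_expect (R : realType) (dT : measure_display) (T : measurableType dT)
  (P : probability T R) (d : nat) (z : 'I_d -> {RV P >-> R})
  (mu : 'cV[R]_d) (Lam : 'M[R]_d) (h : 'cV[R]_d -> R) : R :=
  fine ('E_P[fun w => h (mu + invmx Lam *m zvec z w)%R])%E.

Definition score_mu (R : realType) (d : nat) (i : 'I_d) (mu x : 'cV[R]_d) : R :=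
  x i 0 - mu i 0.

Definition Lmat (R : realType) (d : nat) (Lam : 'M[R]_d) (i j : 'I_d) : 'M[R]_d :=
  Lam *m delta_mx i j + delta_mx i j *m Lam.

Definition lyap_sol (R : realType) (d : nat) (Lam : 'M[R]_d) (i j : 'I_d)
  (A : 'M[R]_d) : Prop :=
  A^T = A /\
  Lam *m Lam *m A + A *m Lam *m Lam
    = - (2%:R^-1 *: (Lmat Lam i j + (Lmat Lam i j)^T)).

Definition quadf (R : realType) (d : nat) (A : 'M[R]_d) (b x : 'cV[R]_d) : R :=
  2%:R^-1 * (x^T *m A *m x) 0 0 + (b^T *m x) 0 0.

Definition score_Lam (R : realType) (dT : measure_display) (T : measurableType dT)
  (P : probability T R) (d : nat) (z : 'I_d -> {RV P >-> R})
  (mu : 'cV[R]_d) (Lam A : 'M[R]_d) (x : 'cV[R]_d) : R :=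
  quadf A (- (A *m mu)) x - model_expect z mu Lam (quadf A (- (A *m mu))).

(* The Wasserstein estimating equations (1/n) sum_t S_k(x_t, theta) = 0
   for all mu_i and all Lambda_ij (A being the symmetric solution of the
   Lyapunov equation, unique for SPD Lambda). *)
Definition wasserstein_eqs (R : realType) (dT : measure_display) (T : measurableType dT)
  (P : probability T R) (d n : nat) (z : 'I_d -> {RV P >-> R})
  (x : 'I_n -> 'cV[R]_d) (mu : 'cV[R]_d) (Lam : 'M[R]_d) : Prop :=
  (forall i : 'I_d, (n%:R)^-1 * \sum_(t < n) score_mu i mu (x t) = 0) /\
  (forall (i j : 'I_d) (A : 'M[R]_d), lyap_sol Lam i j A ->
     (n%:R)^-1 * \sum_(t < n) score_Lam z mu Lam A (x t) = 0).

From HB Require Import structures.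
From mathcomp Require Import all_boot all_order all_algebra.
From mathcomp Require Import all_classical all_reals all_analysis.
From mathcomp Require Import complex ring.
Set Implicit Arguments. Unset Strict Implicit. Unset Printing Implicit Defensive.
Import Order.TTheory GRing.Theory Num.Theory.
Local Open Scope ring_scope.

(* With K = Lam^-1, the model draws x = mu + K z where E z = 0 and E z z^T = I,
   so the quadratic part of each Lam_ij-score has expectation tr(K^T A K)/2.
   Hence the mu-equations say mu = mean(x), and then the Lam_ij-equation says
   tr(A_ij (Sigma - K K^T)) = 0 for the Lyapunov solution A_ij.  The Sylvester
   operator X |-> Lam^2 X + X Lam^2 is invertible and self-adjoint for the
   trace pairing; writing Sigma - K K^T as its image of some E, the equations
   become (Lam (E + E^T) + (E + E^T) Lam)_ji = 0, so E + E^T = 0 and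
   Sigma = K K^T.  The inverse square root of Sigma exists by the spectral
   theorem: a polynomial q with a q(a)^4 = 1 on the spectrum gives
   S = q(Sigma)^2. *)

Section PositiveDefinite.
Variable R : realFieldType.

Definition posdefmx n (M : 'M[R]_n) :=
  forall v : 'cV[R]_n, v != 0 -> 0 < (v^T *m M *m v) 0 0.

Lemma trmx_mulmx_self_gt0 n (v : 'cV[R]_n) : v != 0 -> 0 < (v^T *m v) 0 0.
Proof.
move=> vn0; have sq_ge0 k : 0 <= v^T 0 k * v k 0 by rewrite mxE -expr2 sqr_ge0.
rewrite lt_def mxE sumr_ge0 ?andbT //; apply: contra vn0 => /eqP /psumr_eq0P v0.
apply/eqP/matrixP => i j; rewrite ord1 mxE.
by have /eqP := v0 (fun k _ => sq_ge0 k) i isT; rewrite mxE -expr2 sqrf_eq0 => /eqP.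
Qed.

Lemma posdefmx_quad_ge0 n (M : 'M[R]_n) (v : 'cV[R]_n) :
  posdefmx M -> 0 <= (v^T *m M *m v) 0 0.
Proof.
move=> Mpd; have [->|vn0] := eqVneq v 0; last exact/ltW/Mpd.
by rewrite mulmx0 mxE.
Qed.

Lemma posdefmx_unit n (M : 'M[R]_n) : posdefmx M -> M \in unitmx.
Proof.
move=> Mpd; rewrite -row_free_unit -kermx_eq0; apply/eqP/row_matrixP => i.
rewrite row0; set u := row i _.
have uM : u *m M = 0 by rewrite /u -row_mul mulmx_ker row0.
apply/eqP; apply: contraT => un0.
by have := Mpd u^T; rewrite trmx_eq0 trmxK uM mul0mx mxE ltxx => /(_ un0).
Qed.

Lemma posdefmx_trmx_mul n (L : 'M[R]_n) : L \in unitmx -> posdefmx (L^T *m L).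
Proof.
move=> Lu v vn0; rewrite mulmxA -trmx_mul -mulmxA.
apply: trmx_mulmx_self_gt0; apply: contra vn0 => /eqP Lv0.
by rewrite -[v]mul1mx -(mulVmx Lu) -mulmxA Lv0 mulmx0.
Qed.

Lemma posdefmx_eigenvalue_gt0 n (M : 'M[R]_n) a :
  posdefmx M -> eigenvalue M a -> 0 < a.
Proof.
move=> Mpd /eigenvalueP [v vM vn0].
have := Mpd v^T; rewrite trmx_eq0 trmxK vM -scalemxAl mxE => /(_ vn0).
by rewrite pmulr_lgt0 // -[v in v *m _]trmxK trmx_mulmx_self_gt0 ?trmx_eq0.
Qed.

End PositiveDefinite.

Lemma poly_interpolation (F : fieldType) (s : seq F) (f : F -> F) :
  exists q : {poly F}, {in s, forall a, q.[a] = f a}.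
Proof.
elim: s => [|a s [q hq]]; first by exists 0 => b; rewrite in_nil.
have [as_|as_n] := boolP (a \in s).
  by exists q => b; rewrite inE => /predU1P [->|]; apply: hq.
pose pi := \prod_(b <- s) ('X - b%:P).
have pia : pi.[a] != 0 by rewrite -/(root pi a) root_prod_XsubC.
exists (q + ((f a - q.[a]) / pi.[a]) *: pi) => b; rewrite inE hornerD hornerZ.
case/predU1P => [->|bs]; first by rewrite mulfVK // addrC subrK.
have /rootP -> : root pi b by rewrite root_prod_XsubC.
by rewrite mulr0 addr0 hq.
Qed.

Section RealSymmetric.
Variable R : rcfType.

Lemma trmx_horner_mx n (M : 'M[R]_n.+1) (p : {poly R}) :
  (horner_mx M p)^T = horner_mx M^T p.
Proof.
elim/poly_ind: p => [|p c ih]; first by rewrite !rmorph0 trmx0.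
rewrite !(rmorphD, rmorphM) /= !horner_mx_X !horner_mx_C linearD /= tr_scalar_mx.
by rewrite -[_ * _]/(_ *m _) -[_ * M^T]/(_ *m _) trmx_mul ih comm_mx_horner.
Qed.

Lemma realsym_spectrum n (M : 'M[R]_n.+1) : M^T = M ->
  exists s : seq R, {in s, forall a, eigenvalue M a} /\
    forall p : {poly R}, {in s, forall a, root p a} -> horner_mx M p = 0.
Proof.
move=> Ms; pose f := real_complex R; pose Mc := map_mx f M.
have Mh : Mc \is hermsymmx.
  apply: realsym_hermsym.
    by apply/is_hermitianmxP; rewrite expr0 scale1r map_mx_id // map_trmx Ms.
  by apply/mxOverP => i j; rewrite mxE; apply/complex_realP; eexists.
have /orthomx_spectralP Mdec := hermitian_normalmx Mh.
have Dreal := hermitian_spectral_diag_real Mh.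
move: Mdec Dreal (spectral_unit Mc).
set P := spectralmx Mc; set D := spectral_diag Mc => Mdec Dreal Pu.
pose d k := complex.Re (D 0 k).
have Dd k : D 0 k = f (d k) by rewrite /f /d RRe_real //; exact: (mxOverP Dreal).
exists [seq d k | k <- enum 'I_n.+1]; split.
  move=> _ /mapP [k _ ->]; rewrite -(eigenvalue_map f).
  suff : eigenvalue Mc (D 0 k) by rewrite Dd.
  apply/eigenvalueP; exists (row k P).
    have PM : P *m Mc = diag_mx D *m P by rewrite Mdec !mulmxA mulmxV // mul1mx.
    by rewrite -row_mul PM row_mul row_diag_mx -scalemxAl -rowE.
  apply/eqP => /(congr1 (mulmx^~ (invmx P))); rewrite mul0mx -row_mul mulmxV //.
  by move=> /rowP /(_ k); rewrite !mxE eqxx /= => /eqP; rewrite oner_eq0.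
move=> p p0; apply: (@map_mx_inj _ _ f).
rewrite map_mx0 map_horner_mx -/Mc Mdec horner_mx_uconjC // horner_mx_diag.
have -> : map_mx (horner (map_poly f p)) D = 0.
  apply/rowP => k; rewrite !mxE Dd horner_map /=.
  by rewrite (rootP (p0 _ _)) ?rmorph0 // map_f // mem_enum.
by rewrite linear0 mulmx0 mul0mx.
Qed.

Lemma posdefmx_inv_sqrt n (M : 'M[R]_n) : M^T = M -> posdefmx M ->
  exists S : 'M[R]_n, (S^T = S /\ posdefmx S) /\ S *m S *m M = 1%:M.
Proof.
case: n M => [|n] M Ms Mpd.
  exists 0; rewrite trmx0; split; last by apply/matrixP => [[]].
  by split => // v; rewrite (_ : v = 0) ?eqxx //; apply/matrixP => [[]].
have [s [s_eig s_ann]] := realsym_spectrum Ms.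
(* fourth roots, so that [S = Q^2] is visibly positive definite *)
have [q hq] := poly_interpolation s (fun a => (Num.sqrt (Num.sqrt a))^-1).
pose Q := horner_mx M q.
have QT : Q^T = Q by rewrite trmx_horner_mx Ms.
have MQ : comm_mx M Q := comm_mx_horner q (comm_mx_refl M).
have MQ4 : M *m (Q *m Q *m (Q *m Q)) = 1%:M.
  have : horner_mx M ('X * q ^+ 4 - 1) = 0.
    apply: s_ann => a sa; have a_gt0 := posdefmx_eigenvalue_gt0 Mpd (s_eig a sa).
    rewrite rootE hornerD hornerN hornerM hornerX horner_exp hornerC hq //.
    rewrite exprVn -[4%N]/(2 * 2)%N exprM !sqr_sqrtr ?sqrtr_ge0 ?ltW //.
    by rewrite mulfV ?subrr // gt_eqF.
  rewrite rmorphB rmorphM rmorphXn rmorph1 /= horner_mx_X => /eqP.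
  rewrite subr_eq0 => /eqP MQ4; rewrite -[1%:M]/(1 : 'M[R]_n.+1) -MQ4.
  by rewrite !mulmxA !exprS expr0 mulr1 !mulrA.
have Qu : Q \in unitmx.
  by have [_] := mulmx1_unit MQ4; rewrite !unitmx_mul => /andP[/andP[]].
exists (Q *m Q); split.
  by rewrite trmx_mul QT; split => //; rewrite -{1}QT; exact: posdefmx_trmx_mul.
by rewrite -MQ4; apply/comm_mx_sym; do !apply: comm_mxM.
Qed.

End RealSymmetric.

Section Sylvester.
Variable R : realFieldType.

Definition sylvester n (B X : 'M[R]_n) := B *m X + X *m B.

Fact sylvester_is_semilinear n (B : 'M[R]_n) : semilinear (sylvester B).
Proof.
split=> [a X|X Y]; rewrite /sylvester; last by rewrite mulmxDr mulmxDl addrACA.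
by rewrite -scalemxAl -scalemxAr scalerDr.
Qed.

HB.instance Definition _ n (B : 'M[R]_n) := GRing.isSemilinear.Build
  R 'M[R]_n 'M[R]_n _ (sylvester B) (sylvester_is_semilinear B).

Lemma mxtrace_quad_cols n (B Y : 'M[R]_n) :
  \tr (Y^T *m B *m Y) = \sum_k ((col k Y)^T *m B *m col k Y) 0 0.
Proof.
apply: eq_bigr => k _; rewrite !mxE; apply: eq_bigr => j _; rewrite !mxE.
by congr (_ * _); apply: eq_bigr => l _; rewrite !mxE.
Qed.

Lemma mxtrace_quad_ge0 n (B Y : 'M[R]_n) : posdefmx B -> 0 <= \tr (Y^T *m B *m Y).
Proof.
by move=> Bpd; rewrite mxtrace_quad_cols sumr_ge0 // => k _; apply: posdefmx_quad_ge0.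
Qed.

Lemma mxtrace_quad_eq0 n (B Y : 'M[R]_n) :
  posdefmx B -> \tr (Y^T *m B *m Y) = 0 -> Y = 0.
Proof.
move=> Bpd; rewrite mxtrace_quad_cols => /psumr_eq0P Y0.
apply/matrixP => j k; rewrite mxE.
have : col k Y = 0.
  apply/eqP; apply: contraT => /Bpd; rewrite Y0 ?ltxx // => l _.
  exact: posdefmx_quad_ge0.
by move/matrixP/(_ j 0); rewrite !mxE.
Qed.

(* [tr(X^T B X) = - tr(X B X^T)] when [B X = - X B], and both traces are
   nonnegative. *)
Lemma sylvester_eq0 n (B X : 'M[R]_n) : posdefmx B -> sylvester B X = 0 -> X = 0.
Proof.
move=> Bpd /eqP; rewrite addr_eq0 => /eqP BX.
apply: (mxtrace_quad_eq0 Bpd); apply/eqP; rewrite eq_le mxtrace_quad_ge0 // andbT.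
have -> : \tr (X^T *m B *m X) = - \tr (X^T^T *m B *m X^T).
  rewrite -mulmxA BX mulmxN linearN /= trmxK mulmxA mxtrace_mulC mulmxA.
  by rewrite [in LHS]mxtrace_mulC mulmxA.
by rewrite oppr_le0 mxtrace_quad_ge0.
Qed.

Lemma sylvester_surj n (B G : 'M[R]_n) : posdefmx B -> exists X, sylvester B X = G.
Proof.
move=> Bpd; pose L := lin_mx (sylvester B).
have Lu : L \in unitmx.
  rewrite -row_free_unit -kermx_eq0; apply/eqP/row_matrixP => i.
  rewrite row0; set u := row i _.
  have : u *m L = 0 by rewrite /u -row_mul mulmx_ker row0.
  rewrite -[u]vec_mxK mul_vec_lin => /eqP; rewrite mxvec_eq0 => /eqP.
  by move/(sylvester_eq0 Bpd) ->; rewrite linear0.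
exists (vec_mx (mxvec G *m invmx L)); apply: (can_inj mxvecK).
by rewrite -mul_vec_lin vec_mxK mulmxKV.
Qed.

Lemma trmx_sylvester n (B X : 'M[R]_n) :
  B^T = B -> sylvester B X^T = (sylvester B X)^T.
Proof. by move=> BT; rewrite /sylvester linearD /= !trmx_mul BT addrC. Qed.

Lemma mxtrace_mul_sylvester n (B A E : 'M[R]_n) :
  \tr (A *m sylvester B E) = \tr (sylvester B A *m E).
Proof.
rewrite /sylvester mulmxDr mulmxDl !mxtraceD !mulmxA addrC; congr (_ + _).
by rewrite mxtrace_mulC mulmxA.
Qed.

Lemma sylvester_sym_surj n (B G : 'M[R]_n) : B^T = B -> posdefmx B -> G^T = G ->
  exists A, A^T = A /\ sylvester B A = G.
Proof.
move=> BT Bpd GT; have [X XG] := sylvester_surj G Bpd.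
exists (2^-1 *: (X + X^T)); split.
  by rewrite linearZ /= linearD /= trmxK addrC.
rewrite linearZ linearD /= trmx_sylvester // XG GT -mulr2n -scaler_nat scalerA.
by rewrite mulVf ?scale1r // pnatr_eq0.
Qed.

End Sylvester.

Lemma quad_form_sum (R : comRingType) n (Q : 'M[R]_n) (v : 'cV[R]_n) :
  (v^T *m Q *m v) 0 0 = \sum_k \sum_l Q k l * (v k 0 * v l 0).
Proof.
rewrite mxE; under eq_bigr => l _ do rewrite mxE big_distrl /=.
rewrite exchange_big /=; apply: eq_bigr => k _; apply: eq_bigr => l _.
by rewrite !mxE -mulrA mulrCA.
Qed.

Section Scores.
Variables (R : realType) (dT : measure_display) (T : measurableType dT).
Variable P : probability T R.

Lemma expectation_sumr (I : finType) (F : I -> T -> R) :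
  (forall i, F i \in Lfun P 1) -> ('E_P[\sum_i F i] = \sum_i 'E_P[F i])%E.
Proof.
move=> FL; rewrite -[\sum_i F i](big_map F xpredT idfun) expectation_sum.
  by rewrite big_map.
by move=> _ /mapP [i _ ->].
Qed.

Variables (d : nat) (z : 'I_d -> {RV P >-> R}).
Hypothesis z_int2 : forall i j, P.-integrable setT (EFin \o ((z i : T -> R) \* z j)).
Hypothesis z_cov : forall i j, ('E_P[(z i : T -> R) \* z j] = ((i == j)%:R)%:E)%E.

Lemma expectation_quad_form (Q : 'M[R]_d) :
  let q w := ((zvec z w)^T *m Q *m zvec z w) 0 0 in
  q \in Lfun P 1 /\ ('E_P[q] = (\tr Q)%:E)%E.
Proof.
pose F (p : 'I_d * 'I_d) := Q p.1 p.2 \o* ((z p.1 : T -> R) \* z p.2).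
have FL p : F p \in Lfun P 1 by apply/Lfun_scale/Lfun1_integrable.
have -> : (fun w => ((zvec z w)^T *m Q *m zvec z w) 0 0) = \sum_p F p.
  apply/funext => w; rewrite fct_sumE quad_form_sum pair_big /=.
  by apply: eq_bigr => p _; rewrite /F /zvec !mxE mulrC.
split; first exact: rpred_sum.
rewrite expectation_sumr //.
under eq_bigr => p _ do rewrite expectationZl ?z_cov ?Lfun1_integrable //.
rewrite sumEFin -(pair_big xpredT xpredT (fun k l => Q k l * (k == l)%:R)) /=.
congr EFin; apply: eq_bigr => k _; rewrite (bigD1 k) //= eqxx mulr1 big1 ?addr0 //.
by move=> l /negbTE; rewrite eq_sym => ->; rewrite mulr0.
Qed.

Lemma quadf_shift n (A : 'M[R]_n) (mu y : 'cV[R]_n) : A^T = A ->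
  quadf A (- (A *m mu)) (mu + y) =
  2^-1 * (y^T *m A *m y) 0 0 - 2^-1 * (mu^T *m A *m mu) 0 0.
Proof.
move=> AT; have yAmu : (y^T *m A *m mu) 0 0 = (mu^T *m A *m y) 0 0.
  transitivity ((y^T *m A *m mu)^T 0 0); first by rewrite [RHS]mxE.
  by rewrite !trmx_mul trmxK AT mulmxA.
rewrite /quadf [(mu + y)^T]linearD [(- _)^T]linearN /= !mulmxDl !mulmxDr.
rewrite trmx_mul AT !mulNmx.
have entD (X Y : 'M[R]_1) : (X + Y) 0 0 = X 0 0 + Y 0 0 by rewrite mxE.
have entN (X : 'M[R]_1) : (- X) 0 0 = - X 0 0 by rewrite mxE.
rewrite !(entD, entN) yAmu.
by field.
Qed.

Lemma model_expect_quadf (mu : 'cV[R]_d) (Lam A : 'M[R]_d) : A^T = A ->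
  let K := invmx Lam in
  model_expect z mu Lam (quadf A (- (A *m mu))) =
  2^-1 * \tr (A *m (K *m K^T)) - 2^-1 * (mu^T *m A *m mu) 0 0.
Proof.
move=> AT K; rewrite /model_expect -/K.
have [qL qE] := expectation_quad_form (K^T *m A *m K).
have -> : (fun w => quadf A (- (A *m mu)) (mu + K *m zvec z w)) =
    2^-1 \o* (fun w => ((zvec z w)^T *m (K^T *m A *m K) *m zvec z w) 0 0)
    \- cst (2^-1 * (mu^T *m A *m mu) 0 0).
  by apply/funext => w; rewrite /= quadf_shift // trmx_mul !mulmxA mulrC.
rewrite expectationB ?Lfun_cst ?Lfun_scale // expectationZl //.
by rewrite qE expectation_cst /= -mulmxA mxtrace_mulC mulmxA.
Qed.

Variables (n : nat) (x : 'I_n -> 'cV[R]_d).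
Hypothesis n_gt0 : (0 < n)%N.

Let n_neq0 : n%:R != 0 :> R. Proof. by rewrite pnatr_eq0 -lt0n. Qed.

Lemma mean_score_mu (mu : 'cV[R]_d) i :
  (n%:R)^-1 * \sum_(t < n) score_mu i mu (x t) = sample_mean x i 0 - mu i 0.
Proof.
rewrite /score_mu /sample_mean sumrB mxE summxE sumr_const card_ord.
by rewrite mulrBr -(mulr_natr (mu i 0)) mulrCA mulVf ?mulr1.
Qed.

Lemma sum_quad_centered (A : 'M[R]_d) :
  \sum_(t < n) ((x t - sample_mean x)^T *m A *m (x t - sample_mean x)) 0 0
  = n%:R * \tr (A *m sample_cov x).
Proof.
have quad_tr (y : 'cV[R]_d) : (y^T *m A *m y) 0 0 = \tr (A *m (y *m y^T)).
  by rewrite mulmxA mxtrace_mulC mulmxA /mxtrace big_ord1.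
under eq_bigr do rewrite quad_tr.
rewrite -raddf_sum /= -mulmx_sumr /sample_cov -scalemxAr mxtraceZ.
by rewrite mulrA mulfV ?mul1r.
Qed.

Lemma mean_score_Lam (Lam A : 'M[R]_d) : A^T = A ->
  let K := invmx Lam in
  (n%:R)^-1 * \sum_(t < n) score_Lam z (sample_mean x) Lam A (x t) =
  2^-1 * \tr (A *m (sample_cov x - K *m K^T)).
Proof.
move=> AT K; rewrite /score_Lam model_expect_quadf //.
have shift t : quadf A (- (A *m sample_mean x)) (x t) =
    2^-1 * ((x t - sample_mean x)^T *m A *m (x t - sample_mean x)) 0 0
    - 2^-1 * ((sample_mean x)^T *m A *m sample_mean x) 0 0.
  by rewrite -[x t in LHS](subrK (sample_mean x)) addrC quadf_shift.
under eq_bigr do rewrite shift.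
rewrite !sumrB !sumr_const card_ord -mulr_sumr sum_quad_centered.
rewrite mulmxBr [\tr (_ - _)]linearB /=; field; exact: n_neq0.
Qed.

End Scores.

Section Lyapunov.
Variables (R : realType) (d : nat).
Implicit Types (Lam A D E Y : 'M[R]_d).

Lemma spd_sqr_posdefmx Lam : spd Lam -> posdefmx (Lam *m Lam).
Proof. by move=> [LT Lpd]; rewrite -{1}LT; apply/posdefmx_trmx_mul/posdefmx_unit. Qed.

Lemma mxtrace_delta_mul (i j : 'I_d) Y : \tr (delta_mx i j *m Y) = Y j i.
Proof.
rewrite /mxtrace (bigD1 i) //= big1 ?addr0.
  rewrite mxE (bigD1 j) //= big1 ?addr0; first by rewrite mxE !eqxx mul1r.
  by move=> l /negbTE nlj; rewrite mxE eqxx nlj mul0r.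
move=> k /negbTE nki; rewrite mxE big1 // => l _.
by rewrite mxE nki mul0r.
Qed.

Lemma mxtrace_Lmat_mul Lam Y i j :
  \tr (Lmat Lam i j *m Y) = sylvester Lam Y j i.
Proof.
rewrite /Lmat mulmxDl mxtraceD -mulmxA mxtrace_mulC -!mulmxA !mxtrace_delta_mul.
by rewrite [RHS]mxE addrC.
Qed.

Lemma mxtrace_lyap_sol Lam A E i j : lyap_sol Lam i j A ->
  \tr (A *m sylvester (Lam *m Lam) E) = - 2^-1 * sylvester Lam (E + E^T) j i.
Proof.
move=> [_ AG]; rewrite mxtrace_mul_sylvester /sylvester mulmxA AG.
rewrite mulNmx -scalemxAl mulmxDl linearN linearZ linearD /=.
rewrite -[\tr (_^T *m E)]mxtrace_tr trmx_mul trmxK [\tr (E^T *m _)]mxtrace_mulC.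
by rewrite !mxtrace_Lmat_mul -mulNr -[in RHS]/(sylvester _ _) linearD [in RHS]mxE.
Qed.

Lemma lyap_sol_exists Lam i j : spd Lam -> exists A, lyap_sol Lam i j A.
Proof.
move=> Lspd; have [LT _] := Lspd.
pose G := - (2^-1 *: (Lmat Lam i j + (Lmat Lam i j)^T)).
have GT : G^T = G by rewrite linearN linearZ linearD /= trmxK addrC.
have BT : (Lam *m Lam)^T = Lam *m Lam by rewrite trmx_mul LT.
have [A [AT AG]] := sylvester_sym_surj BT (spd_sqr_posdefmx Lspd) GT.
by exists A; split; rewrite // -/G -AG /sylvester mulmxA.
Qed.

(* Writing [D = Lam^2 E + E Lam^2], the trace conditions say that
   [Lam (E + E^T) + (E + E^T) Lam] vanishes. *)
Lemma lyap_sol_mxtrace_eq0 Lam D : spd Lam -> D^T = D ->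
  (forall i j A, lyap_sol Lam i j A -> \tr (A *m D) = 0) -> D = 0.
Proof.
move=> Lspd DT hD; have [LT Lpd] := Lspd.
have [E DE] := sylvester_surj D (spd_sqr_posdefmx Lspd).
have EE : E + E^T = 0.
  apply: (sylvester_eq0 Lpd); apply/matrixP => a b.
  have [A hA] := lyap_sol_exists b a Lspd.
  have /eqP := hD b a A hA; rewrite -DE (mxtrace_lyap_sol _ hA) mulf_eq0.
  by rewrite oppr_eq0 invr_eq0 pnatr_eq0 /= => /eqP ->; rewrite mxE.
have : D + D^T = 0.
  by rewrite -DE -trmx_sylvester ?trmx_mul ?LT // -linearD EE linear0.
move/eqP; rewrite DT -mulr2n -scaler_nat scaler_eq0 pnatr_eq0 /=.
by move/eqP.
Qed.

End Lyapunov.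

Lemma trmx_sample_cov (R : realType) d n (x : 'I_n -> 'cV[R]_d) :
  (sample_cov x)^T = sample_cov x.
Proof.
rewrite /sample_cov linearZ linear_sum /=; congr (_ *: _).
by apply: eq_bigr => t _; rewrite trmx_mul trmxK.
Qed.

Lemma spd_inv_sqrtP (R : realType) d (M Lam : 'M[R]_d) : spd Lam ->
  spd_inv_sqrt M Lam <-> M = invmx Lam *m (invmx Lam)^T.
Proof.
move=> Lspd; have [LT Lpd] := Lspd; have Lu := posdefmx_unit Lpd.
have KKLL : invmx Lam *m invmx Lam *m (Lam *m Lam) = 1%:M.
  by rewrite -mulmxA (mulmxA (invmx Lam) Lam) mulVmx // mul1mx mulVmx.
rewrite trmx_inv LT; split => [[_ LLM]|->]; last first.
  by split; rewrite // mulmxA -(mulmxA Lam) mulmxV // mulmx1 mulmxV.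
by rewrite -[M]mul1mx -KKLL -(mulmxA _ (Lam *m Lam)) LLM mulmx1.
Qed.

Lemma wasserstein_eqsP (R : realType) (dT : measure_display) (T : measurableType dT)
  (P : probability T R) (d n : nat) (z : 'I_d -> {RV P >-> R})
  (z_int2 : forall i j, P.-integrable setT (EFin \o ((z i : T -> R) \* z j)))
  (z_cov : forall i j, ('E_P[(z i : T -> R) \* z j] = ((i == j)%:R)%:E)%E)
  (x : 'I_n -> 'cV[R]_d) (mu : 'cV[R]_d) (Lam : 'M[R]_d) :
  (0 < n)%N -> spd Lam ->
  wasserstein_eqs z x mu Lam <->
  mu = sample_mean x /\ sample_cov x = invmx Lam *m (invmx Lam)^T.
Proof.
move=> n_gt0 Lspd.
have mu_eqs : (forall i, (n%:R)^-1 * \sum_(t < n) score_mu i mu (x t) = 0) <->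
    mu = sample_mean x.
  split=> [mu_eq0|-> i]; last by rewrite mean_score_mu // subrr.
  apply/matrixP => i j; rewrite ord1; apply/esym/eqP.
  by rewrite -subr_eq0 -mean_score_mu // mu_eq0.
split=> [[/mu_eqs mu_mean Lam_eqs]|[/mu_eqs mu_eq0 Sigma_eq]]; last first.
  split=> // i j A [AT _]; rewrite (mu_eqs.1 mu_eq0) mean_score_Lam //.
  by rewrite Sigma_eq subrr mulmx0 linear0 mulr0.
split=> //; apply/eqP; rewrite -subr_eq0; apply/eqP/(lyap_sol_mxtrace_eq0 Lspd).
  by rewrite linearB /= trmx_sample_cov trmx_mul trmxK.
move=> i j A hA; have := Lam_eqs i j A hA.
rewrite mu_mean mean_score_Lam //; last exact: hA.1.
by move/eqP; rewrite mulf_eq0 invr_eq0 pnatr_eq0 /= => /eqP.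
Qed.

Theorem mainTheorem3 (R : realType) (dT : measure_display) (T : measurableType dT)
  (P : probability T R) (d n : nat)
  (z : 'I_d -> {RV P >-> R})
  (z_int1 : forall i, P.-integrable setT (EFin \o (z i : T -> R)))
  (z_int2 : forall i j, P.-integrable setT (EFin \o ((z i : T -> R) \* z j)))
  (z_mean : forall i, ('E_P[z i] = 0)%E)
  (z_cov : forall i j, ('E_P[(z i : T -> R) \* z j] = ((i == j)%:R)%:E)%E)
  (x : 'I_n -> 'cV[R]_d)
  (hnd : (d <= n)%N)
  (hSigma : spd (sample_cov x)) :
  (exists S : 'M[R]_d, spd_inv_sqrt (sample_cov x) S) /\
  forall (mu : 'cV[R]_d) (Lam : 'M[R]_d), spd Lam ->
    (wasserstein_eqs z x mu Lam <->
     (mu = sample_mean x /\ spd_inv_sqrt (sample_cov x) Lam)).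
Proof.
have [Sigma_sym Sigma_pd] := hSigma.
have [S [S_spd SSM]] := posdefmx_inv_sqrt Sigma_sym Sigma_pd.
split; first by exists S.
move=> mu Lam Lspd; rewrite spd_inv_sqrtP //.
have [n0|n_gt0] := posnP n; last exact: wasserstein_eqsP.
(* with no observations, [d = 0] and all the statements are trivial *)
have d0 : d = 0%N by apply/eqP; rewrite -leqn0 -n0.
subst d; have mx00 (A B : 'M[R]_(0, _)) : A = B by apply/matrixP => [[]].
by split=> _; [split; apply: mx00 | split=> [[]|[]]].
Qed.
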